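(* Let $r_n$ ($n\ge0$) denote the parity of the number of runs of $1$'s in the binary representation of $n$. Then the infinite word $r_0r_1r_2\cdots$ contains no fifth power: there is no nonempty finite word $X$ over $\{0,1\}$ such that $XXXXX$ occurs as a block of consecutive terms $r_a r_{a+1}\cdots r_{a+5|X|-1}$ for some $a\ge0$.
   Context: A run of $1$'s in the binary representation of $n$ is a maximal block of consecutive binary digits equal to $1$; parity means the number modulo $2$. *)

From mathcomp Require Import all_boot.
Set Implicit Arguments. Unset Strict Implicit. Unset Printing Implicit Defensive.

Fixpoint bits_aux (fuel n : nat) : seq bool :=
  match fuel with
  | 0 => [::]
  | fuel'.+1 => if n == 0 then [::] else odd n :: bits_aux fuel' n./2
  end.
Definition bits (n : nat) : seq bool := bits_aux n n.

(* Number of maximal blocks of consecutive 1's in a bit sequence: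
   count positions holding a 1 that are not preceded by a 1. *)
Fixpoint runs_aux (prev : bool) (s : seq bool) : nat :=
  match s with
  | [::] => 0
  | b :: s' => (b && ~~ prev) + runs_aux b s'
  end.
Definition runs1 (n : nat) : nat := runs_aux false (bits n).

Definition r (n : nat) : bool := odd (runs1 n).

From mathcomp Require Import all_boot.
From mathcomp Require Import zify.

Set Implicit Arguments.
Unset Strict Implicit.
Unset Printing Implicit Defensive.

(* Since the runs of 1's of [n.*2] are those of [n], and appending a 1 to [n]
   opens a new run exactly when [n] is even, we have [r (2n) = r n] and
   [r (2n+1) = r n + (1 - n mod 2)].  Hence the difference word
   [d j = r j + r (j+1)] is [1] at [j = 4m], [0] at [j = 4m+2], and
   [k mod 2] at [j = 4k+1].  A factor of period [p] of length [5p] cannot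
   exist: for [p = 1] look at [d] at a multiple of 4; for odd [p > 1] the
   shift by [p] sends two consecutive positions [4m, 4m+4] (or [4m+2, 4m+6])
   to two consecutive positions [4k+1, 4k+5], where [d] takes different
   values although it is constant on the former pair; for even [p] the
   relation [r (2n) = r n] halves the period and we conclude by induction. *)

Lemma bits_aux_enough_fuel f g n : n <= f -> n <= g -> bits_aux f n = bits_aux g n.
Proof.
elim: f g n => [|f IHf] [|g] n //=; rewrite ?leqn0.
- by move=> /eqP ->.
- by move=> _ /eqP ->.
- by move=> lenf leng; case: eqP => // _; congr (_ :: _); apply: IHf; lia.
Qed.

Lemma bits_pos n : 0 < n -> bits n = odd n :: bits n./2.
Proof.
case: n => // n _; rewrite /bits /=.
by congr (_ :: _); apply: bits_aux_enough_fuel; lia.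
Qed.

Lemma runs_aux_false s : runs_aux false s = runs_aux true s + head false s.
Proof. by case: s => [|[] s] /=; lia. Qed.

Lemma r_double n : r n.*2 = r n.
Proof.
case: n => // n; rewrite /r /runs1 bits_pos ?double_gt0 //.
by rewrite odd_double doubleK.
Qed.

Lemma r_doubleS n : r n.*2.+1 = r n (+) ~~ odd n.
Proof.
have head_bits : head false (bits n) = odd n by case: n => // n; rewrite bits_pos.
rewrite /r /runs1 bits_pos // /= odd_double uphalf_double /=.
rewrite runs_aux_false head_bits !oddD.
by case: (odd (runs_aux _ _)); case: (odd n).
Qed.

Definition dr j := r j (+) r j.+1.

Lemma dr_4m m : dr (4 * m) = true.
Proof.
have -> : 4 * m = (m.*2).*2 by lia.
by rewrite /dr r_doubleS !r_double odd_double addbA addbb.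
Qed.

Lemma dr_4m2 m : dr (4 * m + 2) = false.
Proof.
have -> : 4 * m + 2 = (m.*2.+1).*2 by lia.
by rewrite /dr r_doubleS r_double /= odd_double; case: (r _).
Qed.

Lemma dr_4k1 k : dr (4 * k + 1) = odd k.
Proof.
have -> : 4 * k + 1 = (k.*2).*2.+1 by lia.
rewrite /dr r_doubleS -doubleS !r_double r_doubleS odd_double /=.
by case: (r k); case: (odd k).
Qed.

Lemma odd_mod4 s : odd s -> exists k, s = 4 * k + 1 \/ s = 4 * k + 3.
Proof.
move=> odd_s; have := odd_double_half s; rewrite odd_s.
have := odd_double_half s./2; case: (odd s./2) => /= h1 h2.
- by exists s./2./2; right; lia.
- by exists s./2./2; left; lia.
Qed.

Definition r_period a p L := forall i, i + p < L -> r (a + i) = r (a + i + p).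

Lemma dr_period a p L j :
  r_period a p L -> a <= j -> j.+1 + p < a + L -> dr j = dr (j + p).
Proof.
move=> per aj jL; rewrite /dr.
have := per (j - a) ltac:(lia); have := per (j.+1 - a) ltac:(lia).
by rewrite !subnKC ?(leqW aj) // addSn => <- <-.
Qed.

Lemma r_period_halve a q L : r_period a q.*2 L.*2 -> r_period (uphalf a) q L.
Proof.
move=> per i iL; set b := uphalf a.
have := per (2 * (b + i) - a) ltac:(lia).
rewrite subnKC; last lia.
by rewrite -!mul2n -mulnDr !mul2n !r_double.
Qed.

Lemma r_period_one a : ~ r_period a 1 5.
Proof.
move=> per; set m := (a + 3) %/ 4.
have := per (4 * m - a) ltac:(lia); rewrite subnKC; last lia.
by have := dr_4m m; rewrite /dr addn1 => + r_eq; rewrite r_eq addbb.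
Qed.

Lemma r_period_odd a p L : odd p -> p + 11 <= L -> ~ r_period a p L.
Proof.
move=> odd_p pL per; set m := (a + 3) %/ 4.
have shift j : 4 * m <= j <= 4 * m + 6 -> dr j = dr (j + p).
  by move=> /andP [? ?]; apply: (dr_period per); lia.
have [k [s1 | s3]] := @odd_mod4 (4 * m + p) ltac:(by rewrite oddD oddM).
- have := shift (4 * m) ltac:(lia); have := shift (4 * m + 4) ltac:(lia).
  have -> : 4 * m + 4 = 4 * (m + 1) by lia.
  have -> : 4 * (m + 1) + p = 4 * (k + 1) + 1 by lia.
  by rewrite s1 !dr_4m !dr_4k1 oddD /=; case: (odd k).
- have := shift (4 * m + 2) ltac:(lia); have := shift (4 * m + 6) ltac:(lia).
  have -> : 4 * m + 6 = 4 * (m + 1) + 2 by lia.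
  have -> : 4 * (m + 1) + 2 + p = 4 * (k + 2) + 1 by lia.
  have -> : 4 * m + 2 + p = 4 * (k + 1) + 1 by lia.
  by rewrite !dr_4m2 !dr_4k1 !oddD /=; case: (odd k).
Qed.

Lemma no_r_period_5p p a : 0 < p -> ~ r_period a p (5 * p).
Proof.
elim/ltn_ind: p a => p IHp a p_gt0 per.
have [odd_p | even_p] := boolP (odd p).
- have [p_le1 | p_gt1] := leqP p 1.
    have p_eq1 : p = 1 by lia.
    by rewrite p_eq1 in per; exact: r_period_one per.
  by apply: (r_period_odd odd_p _ per); lia.
- have p_eq : p = p./2.*2 by rewrite -[LHS]odd_double_half (negbTE even_p).
  apply: (IHp p./2 _ (uphalf a)); [lia | lia |].
  by apply: r_period_halve; rewrite -p_eq; have -> : (5 * p./2).*2 = 5 * p by lia.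
Qed.

Theorem theorem6 :
  ~ exists (X : seq bool) (a : nat),
      0 < size X /\
      forall i, i < 5 * size X -> r (a + i) = nth false X (i %% size X).
Proof.
case=> X [a [X_gt0 rX]]; apply: (no_r_period_5p (a := a) X_gt0) => i iX.
by rewrite -addnA !rX ?modnDr //; lia.
Qed.
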